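(* In the setting described in the context, for every $\gamma \in (0,\frac12)$ and every $\lambda_0 > 1$, \[\hat\Sigma = \bigcup_{0 \leq k \leq q} F_k \;\cup \bigcup_{0 \leq j < k \leq q} E_{j,k} \;\cup \bigcup_{0 \leq i < j < k \leq q} G_{i,j,k}.\]
   Context: $n\ge3$; $u_0,\dots,u_q$ are non-constant linear (affine) functions on $\mathbb{R}^n$ and $\Omega=\bigcap_{m=0}^q\{u_m\le 0\}$ is a compact convex polytope with non-empty interior. Fix a smooth even $\eta:\mathbb{R}\to\mathbb{R}$ with $\eta(t)=|t|$ for $|t|\ge\frac12$ and $\eta''\ge0$. For $\gamma\in(0,\frac12)$, $\lambda_0>1$ put $\lambda_k=\gamma^{-k}\lambda_0$ ($1\le k\le q$), $\hat u_0=u_0$, $\hat u_k=\frac12\big(\hat u_{k-1}+u_k+\lambda_k^{-1}\eta(\lambda_k(\hat u_{k-1}-u_k))\big)$, and $\hat\Sigma=\{\hat u_q=0\}$. Write $P_m=\{\hat u_{m-1}-u_m>\lambda_m^{-1}\}$, with empty intersections of such sets equal to $\mathbb{R}^n$. Define: $F_0=\hat\Sigma\cap\bigcap_{m=1}^q P_m$; for $1\le k\le q$, $F_k=\hat\Sigma\cap\bigcap_{m=k+1}^q P_m\cap\{\hat u_{k-1}-u_k<-\lambda_k^{-1}\}$. For $1\le k\le q$, $E_{0,k}=\hat\Sigma\cap\bigcap_{m=k+1}^q P_m\cap\bigcap_{m=1}^{k-1}P_m\cap\{-2\lambda_k^{-1}\le\hat u_{k-1}\le0\}\cap\{-2\lambda_k^{-1}\le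 u_k\le0\}\cap\{-2\lambda_k^{-1}\le u_0\le0\}$. For $1\le j<k\le q$, $E_{j,k}=\hat\Sigma\cap\bigcap_{m=k+1}^q P_m\cap\bigcap_{m=j+1}^{k-1}P_m\cap\{-2\lambda_k^{-1}\le\hat u_{k-1}\le0\}\cap\{-2\lambda_k^{-1}\le u_k\le0\}\cap\{-2\lambda_k^{-1}\le u_j\le0\}\cap\{\hat u_{j-1}-u_j<-\lambda_j^{-1}\}$. For $0\le i<j<k\le q$, $G_{i,j,k}=\hat\Sigma\cap\bigcap_{m=k+1}^q P_m\cap\bigcap_{m=j+1}^{k-1}P_m\cap\{-2\lambda_k^{-1}\le\hat u_{k-1}\le0\}\cap\{-2\lambda_k^{-1}\le u_k\le0\}\cap\{-4\lambda_j^{-1}\le u_j\le0\}\cap\{-6\lambda_i^{-1}\le u_i\le0\}$. *)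

From HB Require Import structures.
From mathcomp Require Import all_boot all_order all_algebra.
From mathcomp Require Import all_classical all_reals all_analysis.
Set Implicit Arguments. Unset Strict Implicit. Unset Printing Implicit Defensive.
Import Order.TTheory GRing.Theory Num.Theory.
Import numFieldNormedType.Exports.
Local Open Scope classical_set_scope.
Local Open Scope ring_scope.

Section Defs.
Variables (R : realType) (n : nat).
Variables (eta : R -> R) (gamma lambda0 : R) (u : nat -> 'rV[R]_n -> R).

Definition lam (k : nat) : R := gamma ^- k * lambda0.

Fixpoint hatu (k : nat) (x : 'rV[R]_n) : R :=
  match k with
  | 0 => u 0 x
  | k'.+1 => (hatu k' x + u k'.+1 x
              + (lam k'.+1)^-1 * eta (lam k'.+1 * (hatu k' x - u k'.+1 x))) / 2
  end.

Variable q : nat.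

Definition hatSigma : set 'rV[R]_n := [set x | hatu q x = 0].

Definition Pset (m : nat) : set 'rV[R]_n :=
  [set x | (lam m)^-1 < hatu m.-1 x - u m x].

Definition Pcap (a b : nat) : set 'rV[R]_n :=
  [set x | forall m, (a <= m <= b)%N -> Pset m x].

Definition F0 : set 'rV[R]_n := hatSigma `&` Pcap 1 q.

(* for 1 <= k <= q *)
Definition Fk (k : nat) : set 'rV[R]_n :=
  hatSigma `&` Pcap k.+1 q `&` [set x | hatu k.-1 x - u k x < - (lam k)^-1].

(* for 1 <= k <= q *)
Definition E0k (k : nat) : set 'rV[R]_n :=
  hatSigma `&` Pcap k.+1 q `&` Pcap 1 k.-1
  `&` [set x | - (2 * (lam k)^-1) <= hatu k.-1 x <= 0]
  `&` [set x | - (2 * (lam k)^-1) <= u k x <= 0]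
  `&` [set x | - (2 * (lam k)^-1) <= u 0 x <= 0].

(* for 1 <= j < k <= q *)
Definition Ejk (j k : nat) : set 'rV[R]_n :=
  hatSigma `&` Pcap k.+1 q `&` Pcap j.+1 k.-1
  `&` [set x | - (2 * (lam k)^-1) <= hatu k.-1 x <= 0]
  `&` [set x | - (2 * (lam k)^-1) <= u k x <= 0]
  `&` [set x | - (2 * (lam k)^-1) <= u j x <= 0]
  `&` [set x | hatu j.-1 x - u j x < - (lam j)^-1].

Definition Gijk (i j k : nat) : set 'rV[R]_n :=
  hatSigma `&` Pcap k.+1 q `&` Pcap j.+1 k.-1
  `&` [set x | - (2 * (lam k)^-1) <= hatu k.-1 x <= 0]
  `&` [set x | - (2 * (lam k)^-1) <= u k x <= 0]
  `&` [set x | - (4 * (lam j)^-1) <= u j x <= 0]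
  `&` [set x | - (6 * (lam i)^-1) <= u i x <= 0].

Definition Fset (k : nat) : set 'rV[R]_n := if k == 0%N then F0 else Fk k.
Definition Eset (j k : nat) : set 'rV[R]_n := if j == 0%N then E0k k else Ejk j k.

Definition union_decomposition : set 'rV[R]_n :=
  [set x | (exists k, (k <= q)%N /\ Fset k x)
        \/ (exists j k, (j < k <= q)%N /\ Eset j k x)
        \/ (exists i j k, (i < j)%N /\ (j < k <= q)%N /\ Gijk i j k x)].

End Defs.

Definition Omega (R : realType) (n q : nat) (u : nat -> 'rV[R]_n -> R) : set 'rV[R]_n :=
  [set x | forall m, (m <= q)%N -> u m x <= 0].

Definition nonconst_affine (R : realType) (n : nat) (f : 'rV[R]_n -> R) : Prop :=
  exists (a : 'rV[R]_n) (b : R), a != 0 /\ forall x, f x = (x *m a^T) 0 0 + b.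

From Pilot Require Import Defs.
From HB Require Import structures.
From mathcomp Require Import all_boot all_order all_algebra.
From mathcomp Require Import all_classical all_reals all_analysis.
From mathcomp Require Import zify ring lra.
Import Order.TTheory GRing.Theory Num.Theory.
Import numFieldNormedType.Exports.
Local Open Scope classical_set_scope.
Local Open Scope ring_scope.

Set Implicit Arguments.
Unset Strict Implicit.
Unset Printing Implicit Defensive.

(* hat u_k is a smoothed maximum of hat u_(k-1) and u_k at scale 1/lambda_k:
   convexity of eta gives |t| <= eta t <= |t| + 1/2, so hat u_k lies between
   the maximum and the maximum plus 1/(4 lambda_k), and it equals one of the
   two arguments once they differ by at least 1/(2 lambda_k); in particular
   P_m forces hat u_m = hat u_(m-1).  On hat Sigma, let k be the last index
   where P_k fails, so that hat u_k = 0.  Either u_k wins (F_k), or both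
   arguments lie within 5/(4 lambda_k) below 0.  Repeating with the last
   failure j < k gives E_(0,k) (no failure, hat u_(k-1) = u_0), E_(j,k) (u_j
   wins, u_j = hat u_(k-1)), or G_(i,j,k): there lambda_k^-1 <= lambda_j^-1 / 2
   puts hat u_j within lambda_j^-1 below 0, and i is an index active in
   hat u_(j-1), i.e. 0 <= hat u_(j-1) - u_i <= 3 / (4 lambda_i). *)
Lemma derive2_ge0_convex (R : realType) (f : R -> R) :
  (forall t, derivable f t 1) -> (forall t, derivable (derive1 f) t 1) ->
  (forall t, 0 <= derive1n 2 f t) ->
  forall a b t, a <= b -> 0 <= t <= 1 ->
  f (t * a + (1 - t) * b) <= t * f a + (1 - t) * f b.
Proof.
move=> df dDf D2f a b t ab /andP[t0 t1].
have Df : derive1 f = 'D_1 f by apply/funext => y; rewrite derive1E.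
have cf x : {for x, continuous f}.
  by apply/differentiable_continuous; rewrite -derivable1_diffP.
have := @second_derivative_convex R (f : R -> R^o) a b _ _ _ _ _ (Itv01 t0 t1) ab.
rewrite !convRE /=; apply.
- by move=> x _; have := D2f x; rewrite derive1nS derive1n1 derive1E Df.
- exact/cvg_at_left_filter/cf.
- exact/cvg_at_right_filter/cf.
- by move=> x _; exact: df.
- by move=> x _; rewrite -Df.
Qed.

Section ConvexEta.
Variables (R : realType) (eta : R -> R).
Hypothesis eta_convex : forall a b t, a <= b -> 0 <= t <= 1 ->
  eta (t * a + (1 - t) * b) <= t * eta a + (1 - t) * eta b.
Hypothesis eta_even : forall t, eta (- t) = eta t.
Hypothesis eta_norm : forall t, 2^-1 <= `|t| -> eta t = `|t|.

Lemma eta_half : eta 2^-1 = 2^-1.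
Proof. by rewrite eta_norm ger0_norm. Qed.

Lemma norm_le_eta t : `|t| <= eta t.
Proof.
wlog t0 : t / 0 <= t.
  move=> wlog_t; have [/wlog_t//|t0] := leP 0 t.
  by rewrite -normrN -eta_even wlog_t // oppr_ge0 ltW.
rewrite ger0_norm //; have [th|th] := leP 2^-1 t; first by rewrite eta_norm ger0_norm.
pose tau := (2 * (1 - t))^-1.
have tau0 : 0 < tau by rewrite invr_gt0; lra.
have tau1 : tau <= 1 by rewrite invf_le1; lra.
have tauE : tau * t + (1 - tau) * 1 = 2^-1 by rewrite /tau; field; lra.
have eta1 : eta 1 = 1 by rewrite eta_norm normr1 //; lra.
have := @eta_convex t 1 tau (_ : t <= 1) (_ : 0 <= tau <= 1).
by rewrite tauE eta_half eta1; nra.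
Qed.

Lemma eta_le_half t : `|t| <= 2^-1 -> eta t <= 2^-1.
Proof.
rewrite ler_norml => /andP[t1 t2].
have := @eta_convex (- 2^-1) 2^-1 (2^-1 - t)
  (_ : - 2^-1 <= 2^-1) (_ : 0 <= 2^-1 - t <= 1).
have -> : (2^-1 - t) * - 2^-1 + (1 - (2^-1 - t)) * 2^-1 = t by field.
by rewrite eta_even eta_half; lra.
Qed.

Lemma eta_le_norm_add_half t : eta t <= `|t| + 2^-1.
Proof.
have [th|th] := leP 2^-1 `|t|; first by rewrite eta_norm //; lra.
by have := @eta_le_half t (ltW th); have := normr_ge0 t; lra.
Qed.

End ConvexEta.

Section SmoothMax.
Variables (R : realType) (eta : R -> R).
Hypothesis norm_le_eta : forall t, `|t| <= eta t.
Hypothesis eta_le_norm_add_half : forall t, eta t <= `|t| + 2^-1.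
Hypothesis eta_norm : forall t, 2^-1 <= `|t| -> eta t = `|t|.

Definition smooth_max (L a b : R) : R := (a + b + L^-1 * eta (L * (a - b))) / 2.

Variable L : R.
Hypothesis L_gt0 : 0 < L.

Lemma scaled_eta_bounds a b :
  `|a - b| <= L^-1 * eta (L * (a - b)) <= `|a - b| + L^-1 / 2.
Proof.
have Li : 0 < L^-1 by rewrite invr_gt0.
have LK : L^-1 * `|L * (a - b)| = `|a - b|.
  by rewrite normrM gtr0_norm // mulKf // gt_eqF.
apply/andP; split; first by rewrite -LK ler_pM2l.
by rewrite -LK -mulrDr ler_pM2l // eta_le_norm_add_half.
Qed.

Lemma max_le_smooth_max a b : Num.max a b <= smooth_max L a b.
Proof.
have /andP[h _] := scaled_eta_bounds a b.
by rewrite /smooth_max maxr_absE; lra.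
Qed.

Lemma smooth_max_le_max a b : smooth_max L a b <= Num.max a b + L^-1 / 4.
Proof.
have /andP[_ h] := scaled_eta_bounds a b.
by rewrite /smooth_max maxr_absE; lra.
Qed.

Lemma smooth_max_idl a b : L^-1 / 2 <= a - b -> smooth_max L a b = a.
Proof.
move=> ab; have Li : 0 < L^-1 by rewrite invr_gt0.
have ab0 : 0 <= a - b by lra.
rewrite /smooth_max eta_norm; last first.
  by rewrite normrM gtr0_norm // ger0_norm // -ler_pdivrMl // mulrC.
by rewrite normrM gtr0_norm // ger0_norm // mulKf ?gt_eqF //; field.
Qed.

Lemma smooth_max_idr a b : a - b <= - (L^-1 / 2) -> smooth_max L a b = b.
Proof.
move=> ab; have Li : 0 < L^-1 by rewrite invr_gt0.
have ab0 : a - b <= 0 by lra.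
rewrite /smooth_max eta_norm; last first.
  by rewrite normrM gtr0_norm // ler0_norm // -ler_pdivrMl // mulrC; lra.
by rewrite normrM gtr0_norm // ler0_norm // mulKf ?gt_eqF //; field.
Qed.

End SmoothMax.

Lemma last_counterexample (P : nat -> Prop) a b :
  ~ (forall m, (a <= m <= b)%N -> P m) ->
  exists k, [/\ (a <= k <= b)%N, ~ P k & forall m, (k < m <= b)%N -> P m].
Proof.
move=> /existsNP[k0 /not_implyP[k0ab nPk0]].
pose F k := (a <= k <= b)%N && ~~ `[< P k >].
have exF : exists k, F k by exists k0; rewrite /F k0ab; apply/asboolPn.
have leF k : F k -> (k <= b)%N by case/andP=> /andP[].
case: (ex_maxnP exF leF) => k /andP[kab /asboolPn nPk] maxk.
exists k; split => // m /andP[km mb]; apply: contrapT => nPm.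
have : F m by rewrite /F mb (leq_trans (proj1 (andP kab)) (ltnW km)); apply/asboolPn.
by move/maxk; rewrite leqNgt km.
Qed.

Section HatU.
Variables (R : realType) (n : nat) (eta : R -> R) (gamma lambda0 : R)
  (u : nat -> 'rV[R]_n -> R).
Hypothesis norm_le_eta : forall t, `|t| <= eta t.
Hypothesis eta_le_norm_add_half : forall t, eta t <= `|t| + 2^-1.
Hypothesis eta_norm : forall t, 2^-1 <= `|t| -> eta t = `|t|.
Hypothesis gamma_gt0 : 0 < gamma.
Hypothesis gamma_lt_half : gamma < 2^-1.
Hypothesis lambda0_gt1 : 1 < lambda0.

Local Notation lam := (lam gamma lambda0).
Local Notation hatu := (hatu eta gamma lambda0 u).
Local Notation Pset := (Pset eta gamma lambda0 u).
Local Notation Pcap := (Pcap eta gamma lambda0 u).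

Lemma lam_invE k : (lam k)^-1 = gamma ^+ k / lambda0.
Proof. by rewrite /Defs.lam invfM invrK. Qed.

Lemma lam_inv_gt0 k : 0 < (lam k)^-1.
Proof.
rewrite lam_invE; apply: divr_gt0; first exact: exprn_gt0.
exact: lt_trans ltr01 lambda0_gt1.
Qed.

Lemma lam_gt0 k : 0 < lam k.
Proof. by rewrite -invr_gt0 lam_inv_gt0. Qed.

Lemma lam_inv_halve j k : (j < k)%N -> (lam k)^-1 <= (lam j)^-1 / 2.
Proof.
move=> jk; have g0 := gamma_gt0; have g1 := gamma_lt_half.
rewrite !lam_invE mulrAC ler_pM2r ?invr_gt0; last by have := lambda0_gt1; lra.
have : gamma ^+ k <= gamma ^+ j.+1 by apply: ler_wiXn2l => //; lra.
by rewrite exprS; have := exprn_ge0 j (ltW g0); nra.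
Qed.

Lemma lam_inv_le j k : (j <= k)%N -> (lam k)^-1 <= (lam j)^-1.
Proof.
rewrite leq_eqVlt => /predU1P[-> //|/lam_inv_halve].
by have := lam_inv_gt0 j; lra.
Qed.

Lemma hatuS m x : hatu m.+1 x = smooth_max eta (lam m.+1) (hatu m x) (u m.+1 x).
Proof. by []. Qed.

Lemma max_le_hatuS m x : Num.max (hatu m x) (u m.+1 x) <= hatu m.+1 x.
Proof.
rewrite hatuS.
exact: (max_le_smooth_max norm_le_eta eta_le_norm_add_half (lam_gt0 m.+1)).
Qed.

Lemma hatuS_le_max m x :
  hatu m.+1 x <= Num.max (hatu m x) (u m.+1 x) + (lam m.+1)^-1 / 4.
Proof.
rewrite hatuS.
exact: (smooth_max_le_max norm_le_eta eta_le_norm_add_half (lam_gt0 m.+1)).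
Qed.

Lemma hatuS_idl m x :
  (lam m.+1)^-1 / 2 <= hatu m x - u m.+1 x -> hatu m.+1 x = hatu m x.
Proof. by rewrite hatuS; apply: (smooth_max_idl eta_norm (lam_gt0 m.+1)). Qed.

Lemma hatuS_idr m x :
  hatu m x - u m.+1 x <= - ((lam m.+1)^-1 / 2) -> hatu m.+1 x = u m.+1 x.
Proof. by rewrite hatuS; apply: (smooth_max_idr eta_norm (lam_gt0 m.+1)). Qed.

Lemma hatu_Pcap x a b : (0 < a <= b.+1)%N -> Pcap a b x -> hatu b x = hatu a.-1 x.
Proof.
move=> /andP[a0]; elim: b => [|b IH] ab Pab; first by have -> : a = 1%N by lia.
have [-> //|ne] := eqVneq a b.+2.
have Pb : Pset b.+1 x by apply: Pab; lia.
have := lam_inv_gt0 b.+1; rewrite /Defs.Pset /= in Pb => li0.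
rewrite hatuS_idl; last by lra.
by apply: IH => [|m mab]; [lia | apply: Pab; lia].
Qed.

Lemma last_not_Pset x b : ~ Pcap 1 b x ->
  exists k, [/\ (k < b)%N, ~ Pset k.+1 x, Pcap k.+2 b x & hatu b x = hatu k.+1 x].
Proof.
case/last_counterexample => -[|k] [/andP[// _ kb] nPk Pk].
by exists k; split => //; apply: (@hatu_Pcap x k.+2).
Qed.

Lemma exists_active_index x m :
  exists2 i, (i <= m)%N & u i x <= hatu m x <= u i x + 3 / 4 * (lam i)^-1.
Proof.
elim: m => [|m [i im /andP[ui_le le_ui]]].
  by exists 0%N => //=; have := lam_inv_gt0 0; rewrite lexx /=; lra.
have c0 := lam_inv_gt0 m.+1.
have [ab|ab] := leP ((lam m.+1)^-1 / 2) (hatu m x - u m.+1 x).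
  by exists i; rewrite ?leqW // hatuS_idl ?ui_le.
exists m.+1 => //.
have [ba|ba] := leP (hatu m x - u m.+1 x) (- ((lam m.+1)^-1 / 2)).
  by rewrite hatuS_idr // lexx; lra.
have := max_le_hatuS m x; rewrite ge_max => /andP[_ ->]; rewrite andTb.
have : `|hatu m x - u m.+1 x| < (lam m.+1)^-1 / 2 by rewrite ltr_norml ba ab.
by have := hatuS_le_max m x; rewrite maxr_absE; lra.
Qed.

Lemma not_Pset_window x k r :
  ~ Pset k.+1 x -> - (lam k.+1)^-1 <= hatu k x - u k.+1 x ->
  - r <= hatu k.+1 x <= 0 ->
  - (r + 5 / 4 * (lam k.+1)^-1) <= hatu k x <= 0 /\
  - (r + 5 / 4 * (lam k.+1)^-1) <= u k.+1 x <= 0.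
Proof.
move=> /negP; rewrite -leNgt => dhi dlo /andP[Hlo Hhi].
have : `|hatu k x - u k.+1 x| <= (lam k.+1)^-1 by rewrite ler_norml dlo.
have := hatuS_le_max k x; rewrite maxr_absE.
have := max_le_hatuS k x; rewrite ge_max => /andP[ak bk].
by split; apply/andP; split; lra.
Qed.

Lemma not_Pset_active_window x j :
  ~ Pset j.+1 x -> - (lam j.+1)^-1 <= hatu j x - u j.+1 x ->
  - (lam j.+1)^-1 <= hatu j.+1 x <= 0 ->
  - (4 * (lam j.+1)^-1) <= u j.+1 x <= 0 /\
  exists2 i, (i <= j)%N & - (6 * (lam i)^-1) <= u i x <= 0.
Proof.
move=> nPj dj /(not_Pset_window nPj dj) [/andP[hj_lo hj_hi] /andP[uj_lo uj_hi]].
have lj0 := lam_inv_gt0 j.+1.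
split; first by apply/andP; split; lra.
have [i ij /andP[ui_le le_ui]] := exists_active_index x j.
have lji : (lam j.+1)^-1 <= (lam i)^-1 by apply: lam_inv_le; rewrite leqW.
by exists i => //; apply/andP; split; lra.
Qed.

Lemma hatSigma_sub_union q :
  hatSigma eta gamma lambda0 u q `<=` union_decomposition eta gamma lambda0 u q.
Proof.
move=> x hx; have [Pq|nPq] := pselect (Pcap 1 q x).
  by left; exists 0%N; split => //; split.
have [k [kq nPk Pk hk]] := last_not_Pset nPq; rewrite hx in hk.
have [dk|dk] := ltP (hatu k x - u k.+1 x) (- (lam k.+1)^-1).
  by left; exists k.+1; split => //; repeat split.
have lk0 := lam_inv_gt0 k.+1.
have hk0 : - 0 <= hatu k.+1 x <= 0 by rewrite -hk oppr0 lexx.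
have [/andP[hk_lo hk_hi] /andP[uk_lo uk_hi]] := not_Pset_window nPk dk hk0.
have hk_win : - (2 * (lam k.+1)^-1) <= hatu k x <= 0 by apply/andP; split; lra.
have uk_win : - (2 * (lam k.+1)^-1) <= u k.+1 x <= 0 by apply/andP; split; lra.
have [P1k|nP1k] := pselect (Pcap 1 k x).
  have h0 : hatu k x = u 0 x by rewrite (@hatu_Pcap x 1).
  right; left; exists 0%N, k.+1; split => //.
  by rewrite /Eset /E0k /= -h0; repeat split.
have [j [jk nPj Pj hj]] := last_not_Pset nP1k.
have [dj|dj] := ltP (hatu j x - u j.+1 x) (- (lam j.+1)^-1).
  have uj_win : - (2 * (lam k.+1)^-1) <= u j.+1 x <= 0.
    by rewrite -hatuS_idr -?hj //; have := lam_inv_gt0 j.+1; lra.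
  right; left; exists j.+1, k.+1; split; first by rewrite ltnS jk.
  by rewrite /Eset /Ejk /=; repeat split.
have lkj : (lam k.+1)^-1 <= (lam j.+1)^-1 / 2 by apply: lam_inv_halve; rewrite ltnS.
have hj_win : - (lam j.+1)^-1 <= hatu j.+1 x <= 0.
  by rewrite -hj; apply/andP; split; lra.
have [uj_win [i ij ui_win]] := not_Pset_active_window nPj dj hj_win.
right; right; exists i, j.+1, k.+1; rewrite ltnS ij ltnS jk.
by repeat split.
Qed.

End HatU.

Lemma union_sub_hatSigma (R : realType) (n : nat) (eta : R -> R) gamma lambda0
    (u : nat -> 'rV[R]_n -> R) q :
  union_decomposition eta gamma lambda0 u q `<=` hatSigma eta gamma lambda0 u q.
Proof.
move=> x [[k [_]]|[[j [k [_]]]|[i [j [k [_ [_]]]]]]]; rewrite ?/Fset ?/Eset;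
  try case: ifP => _; by rewrite /F0 /Fk /E0k /Ejk /Gijk -?setIA => -[].
Qed.

Theorem proposition2p17 (R : realType) (n q : nat) (u : nat -> 'rV[R]_n -> R)
  (eta : R -> R) :
  (3 <= n)%N ->
  (forall m, (m <= q)%N -> nonconst_affine (u m)) ->
  compact (Omega q u) ->
  interior (Omega q u) !=set0 ->
  (* eta smooth, even, eta(t) = |t| for |t| >= 1/2, eta'' >= 0 *)
  (forall (k : nat) (t : R), derivable (derive1n k eta) t 1) ->
  (forall t, eta (- t) = eta t) ->
  (forall t, 2^-1 <= `|t| -> eta t = `|t|) ->
  (forall t, 0 <= derive1n 2 eta t) ->
  forall gamma lambda0 : R, 0 < gamma < 2^-1 -> 1 < lambda0 ->
  hatSigma eta gamma lambda0 u q = union_decomposition eta gamma lambda0 u q.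
Proof.
move=> _ _ _ _ eta_smooth eta_even eta_norm eta''_ge0 gamma lambda0
  /andP[gamma_gt0 gamma_lt_half] lambda0_gt1.
have eta_convex := derive2_ge0_convex (eta_smooth 0%N) (eta_smooth 1%N) eta''_ge0.
have norm_le_eta := norm_le_eta eta_convex eta_even eta_norm.
have eta_le_norm_add_half := eta_le_norm_add_half eta_convex eta_even eta_norm.
apply/seteqP; split; last exact: union_sub_hatSigma.
exact: hatSigma_sub_union.
Qed.
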